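(* Let $H=(V,E)$ be a hypergraph whose vertex set $V$ is a partition of $[n]$ into sets of cardinality at least $2$, and suppose $H$ is $\alpha$-acyclic. Let $T=(E,\mathcal{E})$ be a join tree of $H$. Then \[ \mathrm{MC}^H=\Big\{w\in \mathbb{R}_{\geq 0}^{\mathcal{J}^H}\ \Big|\ w(I)=1\ \forall\, I\in V;\quad w_i - \sum_{J\in \mathcal{J}^e:\, J\ni i}w_J = 0\ \ \forall\, e\in E,\ \forall\, i\in I\in e; \] \[ \sum_{J\in \mathcal{J}^e:\, J\supseteq J_0} w_J -\sum_{J\in \mathcal{J}^{e'}:\, J\supseteq J_0}w_J = 0\ \ \forall\, \{e,e'\}\in \mathcal{E} \text{ with } |e\cap e'|>1,\ \forall\, J_0\in \mathcal{J}^{e\cap e'}\Big\}. \]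
   Context: Let $n$ be a positive integer, $[n]=\{1,\dots,n\}$. A hypergraph $H=(V,E)$ here has as vertex set $V$ a family of pairwise disjoint subsets of $[n]$, each of cardinality at least $2$, and hyperedge set $E$ consisting of subsets $e\subseteq V$ with $|e|\ge 2$. Write $L(V)=\{\{I\}: I\in V\}$. For a nonempty $e\subseteq V$, $\mathcal{J}^e$ denotes the family of sets $J\subseteq \bigcup_{I\in e} I$ with $|J\cap I|=1$ for every $I\in e$. Let $\mathcal{J}^H=\bigcup_{e\in L(V)\cup E}\mathcal{J}^e$ (it contains every singleton $\{i\}$, $i\in\bigcup V$). For $w\in\mathbb{R}^{\mathcal{J}^H}$ write $w_i=w_{\{i\}}$ and $w(A)=\sum_{i\in A}w_i$. Let $\mathscr{S}^H=\{w\in\{0,1\}^{\mathcal{J}^H}: w(I)=1\ \forall I\in V;\ w_J=\prod_{i\in J}w_i\ \forall J\in\mathcal{J}^H, |J|>1\}$ and $\mathrm{MC}^H=\operatorname{conv}\mathscr{S}^H$. A join tree of $H$ is a tree $T$ with node set $E$ such that for any two distinct nodes $e_1,e_2$, every node $e$ on the unique path in $T$ between them satisfies $e_1\cap e_2\subseteq e$. $H$ is $\alpha$-acyclic in the sense of Fagin; equivalently (Beeri et al.) $H$ admits a join tree. *)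

From HB Require Import structures.
From mathcomp Require Import all_boot all_order all_algebra.
From mathcomp Require Import reals.
Set Implicit Arguments. Unset Strict Implicit. Unset Printing Implicit Defensive.
Import Order.TTheory GRing.Theory Num.Theory.
Local Open Scope ring_scope.

Notation vtx n := {set 'I_n}.
Notation hedge n := {set {set 'I_n}}.

Definition Jfam n (e : hedge n) : {set vtx n} :=
  [set J : vtx n | (J \subset \bigcup_(I in e) I) && [forall I in e, #|J :&: I| == 1%N]].

Definition LV n (V : hedge n) : {set hedge n} := [set [set I] | I in V].

Definition JH n (V : hedge n) (E : {set hedge n}) : {set vtx n} :=
  \bigcup_(e in LV V :|: E) Jfam e.

(* Vectors of R^{J^H} are represented as functions on all subsets of [n]
   vanishing outside J^H. *)
Definition vec (R : realType) n := {ffun vtx n -> R}.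

Definition supp_in (R : realType) n (V : hedge n) (E : {set hedge n}) (w : vec R n) : Prop :=
  forall J : vtx n, J \notin JH V E -> w J = 0.

Definition wsum (R : realType) n (w : vec R n) (A : vtx n) : R :=
  \sum_(i in A) w [set i].

Definition SH (R : realType) n (V : hedge n) (E : {set hedge n}) (w : vec R n) : Prop :=
  [/\ supp_in V E w,
      (forall J, J \in JH V E -> w J = 0 \/ w J = 1),
      (forall I, I \in V -> wsum w I = 1) &
      (forall J, J \in JH V E -> (1 < #|J|)%N -> w J = \prod_(i in J) w [set i])].

Definition conv (R : realType) n (P : vec R n -> Prop) (w : vec R n) : Prop :=
  exists (k : nat) (pts : 'I_k -> vec R n) (lam : 'I_k -> R),
    [/\ (forall j, P (pts j)), (forall j, 0 <= lam j), \sum_(j < k) lam j = 1 &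
        forall J, w J = \sum_(j < k) lam j * pts j J].

Definition MC (R : realType) n (V : hedge n) (E : {set hedge n}) (w : vec R n) : Prop :=
  conv (SH V E) w.

Definition has_cycle n (t : rel (hedge n)) (E : {set hedge n}) : Prop :=
  exists (v : hedge n) (p : seq (hedge n)),
    [/\ (2 <= size p)%N, all (mem E) (v :: p), uniq (v :: p), path t v p & t (last v p) v].

Definition connected_on n (t : rel (hedge n)) (E : {set hedge n}) : Prop :=
  forall e1 e2, e1 \in E -> e2 \in E ->
    exists p : seq (hedge n), [/\ all (mem E) p, path t e1 p & last e1 p = e2].

Definition is_tree n (E : {set hedge n}) (t : rel (hedge n)) : Prop :=
  [/\ (forall e e', t e e' -> (e \in E) && (e' \in E)),
      symmetric t, irreflexive t, connected_on t E & ~ has_cycle t E].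

Definition join_tree n (E : {set hedge n}) (t : rel (hedge n)) : Prop :=
  is_tree E t /\
  forall e1 e2, e1 \in E -> e2 \in E -> e1 != e2 ->
    forall p : seq (hedge n), path t e1 p -> last e1 p = e2 -> uniq (e1 :: p) ->
      forall e, e \in e1 :: p -> e1 :&: e2 \subset e.

(* alpha-acyclic, via the Beeri et al. characterization given in the paper *)
Definition alpha_acyclic n (E : {set hedge n}) : Prop :=
  exists t : rel (hedge n), join_tree E t.

Definition RHSpolytope (R : realType) n (V : hedge n) (E : {set hedge n}) (t : rel (hedge n))
  (w : vec R n) : Prop :=
  [/\ supp_in V E w,
      (forall J, J \in JH V E -> 0 <= w J),
      (forall I, I \in V -> wsum w I = 1),
      (forall e I i, e \in E -> I \in e -> i \in I ->
         w [set i] - \sum_(J in Jfam e | i \in J) w J = 0) &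
      (forall e e', e \in E -> e' \in E -> t e e' -> (1 < #|e :&: e'|)%N ->
         forall J0, J0 \in Jfam (e :&: e') ->
           \sum_(J in Jfam e | J0 \subset J) w J
             - \sum_(J in Jfam e' | J0 \subset J) w J = 0)].

(* Both sides are described by probability distributions p on the transversals S
   of V (the sets meeting every I in V in exactly one point).  The vertices of MC^H
   are the vectors x_S with x_S(J) = [J \subset S], so w lies in MC^H iff every
   w(J) is the probability, under some such p, that the random transversal
   contains J.  Such marginals satisfy the linear constraints on the right, and
   that polytope is convex.  Conversely, the constraints say that w restricted to
   J^e is a distribution for every piece e, and that the distributions of two
   hyperedges adjacent in the join tree have the same marginals on their common
   vertices.  Gluing these local distributions one hyperedge at a time along the
   join tree, each time making the new hyperedge conditionally independent of the
   part already glued given their overlap, yields a global distribution: by the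
   running intersection property the overlap lies inside a single neighbouring
   hyperedge, where consistency is exactly the constraint on that tree edge.  The
   vertices of V outside every hyperedge are finally glued in independently. *)

From HB Require Import structures.
From mathcomp Require Import all_boot all_order all_algebra.
From mathcomp Require Import reals.
Import Order.TTheory GRing.Theory Num.Theory.
Local Open Scope ring_scope.
Set Implicit Arguments. Unset Strict Implicit. Unset Printing Implicit Defensive.

Section Cover.
Variable T : finType.
Implicit Types (P Q : {set {set T}}) (A : {set T}).

Lemma sub_cover P A : A \in P -> A \subset cover P.
Proof. exact: bigcup_sup. Qed.

Lemma cover_subset P Q : P \subset Q -> cover P \subset cover Q.
Proof. by move=> sPQ; apply/bigcupsP => A /(subsetP sPQ); apply: sub_cover. Qed.

Lemma cover_setU P Q : cover (P :|: Q) = cover P :|: cover Q.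
Proof. exact: bigcup_setU. Qed.

Lemma cover_setI_trivIset P Q :
  trivIset (P :|: Q) -> cover P :&: cover Q = cover (P :&: Q).
Proof.
move=> /trivIsetP tPQ; apply/eqP; rewrite eqEsubset subsetI.
rewrite (cover_subset (subsetIl P Q)) (cover_subset (subsetIr P Q)) !andbT.
apply/subsetP => x /setIP[/bigcupP[A AP xA] /bigcupP[B BQ xB]].
have AB : A = B.
  apply/eqP/negPn/negP => /(tPQ A B); rewrite !inE AP BQ orbT => /(_ isT isT).
  by move/disjointFr => /(_ x xA); rewrite xB.
by apply/bigcupP; exists A; rewrite // inE AP AB BQ.
Qed.

End Cover.

Section Transversals.
Variable n : nat.
Implicit Types (U : hedge n) (I J K : vtx n).

Lemma JfamP U J :
  reflect (J \subset cover U /\ forall I, I \in U -> #|J :&: I| = 1%N) (J \in Jfam U).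
Proof.
rewrite inE; apply: (iffP andP) => [[sJ /forall_inP cJ]|[sJ cJ]].
  by split=> // I /cJ /eqP.
by split=> //; apply/forall_inP => I /cJ ->.
Qed.

Lemma Jfam_sub_cover U J : J \in Jfam U -> J \subset cover U.
Proof. by case/JfamP. Qed.

Lemma Jfam_card1 U J I : J \in Jfam U -> I \in U -> #|J :&: I| = 1%N.
Proof. by case/JfamP => _; apply. Qed.

Lemma Jfam_restr U U' J : U' \subset U -> J \in Jfam U -> J :&: cover U' \in Jfam U'.
Proof.
move=> sU JU; apply/JfamP; split=> [|I IU']; first exact: subsetIr.
by rewrite -setIA (setIidPr (sub_cover IU')) (Jfam_card1 JU) // (subsetP sU).
Qed.

Lemma Jfam_subsetE U U' J K : U' \subset U -> J \in Jfam U -> K \in Jfam U' ->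
  (K \subset J) = (J :&: cover U' == K).
Proof.
move=> sU JU KU'; apply/idP/eqP => [sKJ|<-]; last exact: subsetIl.
apply/eqP; rewrite eq_sym eqEsubset subsetI sKJ Jfam_sub_cover //=.
apply/subsetP => x /setIP[xJ /bigcupP[I IU' xI]].
have eKJ : K :&: I = J :&: I.
  apply/eqP; rewrite eqEcard setSI // (Jfam_card1 JU) ?(Jfam_card1 KU') //.
  exact: (subsetP sU).
by have /setIP[] : x \in K :&: I by rewrite eKJ inE xJ.
Qed.

Lemma Jfam_setU U1 U2 J1 J2 : J1 \in Jfam U1 -> J2 \in Jfam U2 ->
  J1 :&: cover U2 = J2 :&: cover U1 -> J1 :|: J2 \in Jfam (U1 :|: U2).
Proof.
move=> /JfamP[s1 c1] /JfamP[s2 c2] e12; apply/JfamP.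
split=> [|I]; first by rewrite cover_setU setUSS.
have side (A B : vtx n) (C D : hedge n) I' : A :&: cover D = B :&: cover C ->
    I' \in C -> B :&: I' \subset A :&: I'.
  move=> eAB I'C; rewrite subsetI subsetIr andbT.
  by apply: subset_trans (subsetIl A (cover D)); rewrite eAB setIS // sub_cover.
rewrite setIUl => /setUP[IU1|IU2].
  by rewrite (setUidPl (side _ _ _ _ _ e12 IU1)) c1.
by rewrite (setUidPr (side _ _ _ _ _ (esym e12) IU2)) c2.
Qed.

Lemma Jfam0 : Jfam (set0 : hedge n) = [set set0].
Proof.
apply/setP => J; rewrite in_set1; apply/JfamP/eqP => [[sJ _]|->].
  by apply/eqP; rewrite -subset0; move: sJ; rewrite /cover big_set0.
by split=> [|I]; rewrite ?sub0set ?inE.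
Qed.

Lemma Jfam1 I : Jfam [set I] = [set [set i] | i in I].
Proof.
apply/setP => J; apply/JfamP/imsetP => [[sJ cJ]|[i iI ->]].
  rewrite cover1 in sJ; move: (cJ I (set11 I)); rewrite (setIidPl sJ).
  by move/eqP/cards1P => [i eJ]; exists i => //; rewrite -sub1set -eJ.
split=> [|I' /set1P ->]; first by rewrite cover1 sub1set.
by rewrite (setIidPl _) ?cards1 // sub1set.
Qed.

Lemma set1_Jfam1 I i : i \in I -> [set i] \in Jfam [set I].
Proof. by move=> iI; rewrite Jfam1 imset_f. Qed.

Lemma sum_Jfam1 (R : nmodType) I (F : vtx n -> R) :
  \sum_(J in Jfam [set I]) F J = \sum_(i in I) F [set i].
Proof. by rewrite Jfam1 big_imset // => i j _ _; apply: set1_inj. Qed.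

End Transversals.

Section Distributions.
Variables (R : numFieldType) (n : nat).
Implicit Types (U : hedge n) (J K S : vtx n) (p q : vtx n -> R).

(* A probability distribution on the transversals J^U is a function on all subsets
   of [n] supported on J^U; [marg p K] is the probability that the random
   transversal contains K. *)
Definition marg p K := \sum_(J : vtx n | K \subset J) p J.
Definition supp U p := forall J, J \notin Jfam U -> p J = 0.
Definition distr U p := [/\ forall J, 0 <= p J, supp U p & \sum_J p J = 1].
Definition dirac S J : R := if J == S then 1 else 0.

Lemma marg_supp U p K : supp U p -> marg p K = \sum_(J in Jfam U | K \subset J) p J.
Proof.
move=> sp; rewrite /marg [RHS]big_mkcondl /=; apply: eq_bigr => J _.
by case: ifP => // /negbT /sp.
Qed.

Lemma sum_supp U p : supp U p -> \sum_(J in Jfam U) p J = \sum_J p J.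
Proof.
by move=> sp; rewrite [RHS](bigID (mem (Jfam U))) /= [X in _ + X]big1 ?addr0 // => J /sp.
Qed.

Lemma marg0 p : marg p set0 = \sum_J p J.
Proof. by apply: eq_bigl => J; rewrite sub0set. Qed.

Lemma distr_marg0 U p : distr U p -> marg p set0 = 1.
Proof. by case=> _ _ p1; rewrite marg0. Qed.

Lemma marg_ge0 p K : (forall J, 0 <= p J) -> 0 <= marg p K.
Proof. by move=> p0; apply: sumr_ge0. Qed.

Lemma marg_ge p K J : (forall J, 0 <= p J) -> K \subset J -> p J <= marg p K.
Proof. by move=> p0 sKJ; rewrite /marg (bigD1 J) //= lerDl sumr_ge0. Qed.

Lemma marg_self U p K : supp U p -> K \in Jfam U -> marg p K = p K.
Proof.
move=> sp KU; rewrite (marg_supp _ sp) (big_pred1 K) // => J /=.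
apply/andP/eqP => [[JU sKJ]|->]; last by rewrite KU subxx.
by move: sKJ; rewrite (Jfam_subsetE (subxx U)) // (setIidPl (Jfam_sub_cover JU)) => /eqP.
Qed.

Lemma sum_marg_Jfam U U' p K : supp U p -> U' \subset U -> K \subset cover U' ->
  \sum_(J' in Jfam U' | K \subset J') marg p J' = marg p K.
Proof.
move=> sp sU sK; rewrite /marg (exchange_big_dep (fun J => K \subset J)) /=; last first.
  by move=> J' J /andP[_ sKJ'] /(subset_trans sKJ').
apply: eq_bigr => J sKJ; have [JU|/sp -> ] := boolP (J \in Jfam U); last first.
  by rewrite big1.
rewrite (big_pred1 (J :&: cover U')) // => J' /=.
apply/andP/eqP => [[/andP[J'U' _] sJ'J]|->].
  by apply/esym/eqP; rewrite -(Jfam_subsetE sU JU J'U').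
by rewrite (Jfam_restr sU JU) subsetIl subsetI sKJ sK.
Qed.

Lemma marg_eq_on U1 U2 U p q : supp U1 p -> supp U2 q -> U \subset U1 -> U \subset U2 ->
  {in Jfam U, marg p =1 marg q} -> forall K, K \subset cover U -> marg p K = marg q K.
Proof.
move=> sp sq sU1 sU2 pq K sK.
rewrite -(sum_marg_Jfam sp sU1 sK) -(sum_marg_Jfam sq sU2 sK).
by apply: eq_bigr => J /andP[/pq].
Qed.

Lemma consistent_disjoint U1 U2 p q : distr U1 p -> distr U2 q -> U1 :&: U2 = set0 ->
  {in Jfam (U1 :&: U2), marg p =1 marg q}.
Proof.
by move=> dp dq -> K; rewrite Jfam0 => /set1P ->; rewrite (distr_marg0 dp) (distr_marg0 dq).
Qed.

Lemma marg_dirac S K : marg (dirac S) K = if K \subset S then 1 else 0.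
Proof.
rewrite /marg /dirac; case: ifP => [sKS|/negbT nsKS].
  by rewrite (bigD1 S) //= eqxx big1 ?addr0 // => J /andP[_ /negbTE ->].
by rewrite big1 // => J sKJ; case: eqP => // eJ; rewrite -eJ sKJ in nsKS.
Qed.

Lemma distr_dirac U S : S \in Jfam U -> distr U (dirac S).
Proof.
move=> SU; split=> [J|J JU|]; rewrite /dirac; first by case: ifP.
  by case: eqP => // eJ; rewrite eJ SU in JU.
by rewrite -marg0 marg_dirac sub0set.
Qed.

End Distributions.

Arguments dirac {R n} S J.

Section Glue.
Variables (R : numFieldType) (n : nat) (U1 U2 : hedge n).
Implicit Types (J K : vtx n).

(* The distribution with marginals p on U1 and q on U2 under which the two sides
   are conditionally independent given the common vertices.  The denominator can
   only vanish where p does too, so the junk value x / 0 = 0 is harmless. *)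
Definition glue (p q : vtx n -> R) J : R :=
  if J \in Jfam (U1 :|: U2) then
    p (J :&: cover U1) * q (J :&: cover U2) / marg q (J :&: cover U1 :&: cover U2)
  else 0.

Lemma glue_supp p q : supp (U1 :|: U2) (glue p q).
Proof. by move=> J /negbTE; rewrite /glue => ->. Qed.

Lemma sum_Jfam_setU (F : vtx n -> R) J1 : J1 \in Jfam U1 ->
  \sum_(J in Jfam (U1 :|: U2) | J :&: cover U1 == J1) F (J :&: cover U2)
  = \sum_(J2 in Jfam U2 | J2 :&: cover U1 == J1 :&: cover U2) F J2.
Proof.
move=> J1U1; have sJ1 := Jfam_sub_cover J1U1.
rewrite (reindex_onto (fun J2 => J1 :|: J2) (fun J => J :&: cover U2)) /=; last first.
  move=> J /andP[JU /eqP <-].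
  by rewrite -setIUr -cover_setU (setIidPl (Jfam_sub_cover JU)).
apply: eq_big => [J2|J2 /andP[_ /eqP -> //]].
apply/idP/idP => [/andP[/andP[JU /eqP e1] /eqP e2]|/andP[J2U2 /eqP e]].
  by rewrite -e2 (Jfam_restr (subsetUr U1 U2) JU) setIAC e1 /=.
rewrite (Jfam_setU J1U1 J2U2 (esym e)) !setIUl (setIidPl sJ1).
rewrite (setIidPl (Jfam_sub_cover J2U2)) -e (setUidPr (subsetIl _ _)) (setUidPl _) ?eqxx //.
by rewrite e subsetIl.
Qed.

Variables (p q : vtx n -> R).
Hypotheses (tU : trivIset (U1 :|: U2)) (dp : distr U1 p) (dq : distr U2 q).
Hypothesis pq : {in Jfam (U1 :&: U2), marg p =1 marg q}.

Lemma glue_ge0 J : 0 <= glue p q J.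
Proof.
have [p0 _ _] := dp; have [q0 _ _] := dq.
by rewrite /glue; case: ifP => // _; rewrite divr_ge0 ?mulr_ge0 ?marg_ge0.
Qed.

Lemma marg_glue_Jfam J1 : J1 \in Jfam U1 -> marg (glue p q) J1 = p J1.
Proof.
move=> J1U1; have [p0 _ _] := dp; have [q0 sq _] := dq.
set K := J1 :&: cover U2.
have KU : K \in Jfam (U1 :&: U2).
  rewrite /K -(setIidPl (Jfam_sub_cover J1U1)) -setIA cover_setI_trivIset //.
  exact: Jfam_restr (subsetIl _ _) J1U1.
have -> : marg (glue p q) J1 = p J1 / marg q K *
    \sum_(J in Jfam (U1 :|: U2) | J :&: cover U1 == J1) q (J :&: cover U2).
  rewrite mulr_sumr /marg big_mkcond [RHS]big_mkcond /=; apply: eq_bigr => J _.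
  rewrite /glue; case JU: (J \in Jfam (U1 :|: U2)); last by rewrite if_same.
  rewrite (Jfam_subsetE (subsetUl U1 U2) JU J1U1); case: eqP => // eJ1.
  by rewrite eJ1 mulrAC.
rewrite sum_Jfam_setU // -/K.
have -> : \sum_(J2 in Jfam U2 | J2 :&: cover U1 == K) q J2 = marg q K.
  rewrite (marg_supp _ sq); apply: eq_bigl => J2; apply: andb_id2l => J2U2.
  rewrite (Jfam_subsetE (subsetIr U1 U2) J2U2 KU) -(cover_setI_trivIset tU) setIA.
  by rewrite setIAC (setIidPl (Jfam_sub_cover J2U2)).
have [mK0|mK_neq0] := eqVneq (marg q K) 0; last by rewrite divfK.
rewrite mK0 mulr0; apply/esym/le_anti; rewrite p0 andbT -mK0 -(pq KU).
exact: marg_ge p0 (subsetIl _ _).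
Qed.

Lemma marg_glue K : K \subset cover U1 -> marg (glue p q) K = marg p K.
Proof.
have [_ sp _] := dp.
apply: (marg_eq_on (glue_supp p q) sp (subsetUl U1 U2) (subxx U1)) => J1 J1U1.
by rewrite marg_glue_Jfam // (marg_self sp J1U1).
Qed.

End Glue.

Lemma glueC (R : numFieldType) n (U1 U2 : hedge n) (p q : vtx n -> R) :
  trivIset (U1 :|: U2) -> {in Jfam (U1 :&: U2), marg p =1 marg q} ->
  glue U1 U2 p q =1 glue U2 U1 q p.
Proof.
move=> tU pq J; rewrite /glue setUC; case: ifP => // JU.
rewrite [q _ * p _]mulrC [in RHS]setIAC pq // -setIA cover_setI_trivIset //.
exact: Jfam_restr (subset_trans (subsetIl _ _) (subsetUr _ _)) JU.
Qed.

Lemma glue_distr (R : numFieldType) n (U1 U2 : hedge n) (p q : vtx n -> R) :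
  trivIset (U1 :|: U2) -> distr U1 p -> distr U2 q ->
  {in Jfam (U1 :&: U2), marg p =1 marg q} ->
  [/\ distr (U1 :|: U2) (glue U1 U2 p q),
      forall K : vtx n, K \subset cover U1 -> marg (glue U1 U2 p q) K = marg p K &
      forall K : vtx n, K \subset cover U2 -> marg (glue U1 U2 p q) K = marg q K].
Proof.
move=> tU dp dq pq; have m1 := marg_glue tU dp dq pq.
have m2 (K : vtx n) : K \subset cover U2 -> marg (glue U1 U2 p q) K = marg q K.
  move=> sK; rewrite /marg (eq_bigr _ (fun J _ => glueC tU pq J)).
  apply: (marg_glue _ dq dp) sK; first by rewrite setUC.
  by move=> K'; rewrite setIC => /pq ->.
split=> //; split; [exact: glue_ge0 | exact: glue_supp |].
by rewrite -marg0 m1 ?sub0set // (distr_marg0 dp).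
Qed.

Lemma set_grow (T : finType) (X : {set T}) (Q : {set T} -> Prop) :
  Q set0 ->
  (forall W : {set T}, W \proper X -> Q W -> exists2 x, x \in X :\: W & Q (x |: W)) ->
  Q X.
Proof.
move=> Q0 QS.
suff grow k : (k <= #|X|)%N -> exists2 W : {set T}, (W \subset X) && (#|W| == k) & Q W.
  have [W /andP[sWX /eqP cW] QW] := grow _ (leqnn #|X|).
  suff <- : W = X by [].
  by apply/eqP; rewrite eqEcard sWX cW /=.
elim: k => [_|k IH ltkX]; first by exists set0; rewrite ?sub0set ?cards0.
have [W /andP[sWX /eqP cW] QW] := IH (ltnW ltkX).
have [|x /setDP[xX xW] Qx] := QS W _ QW; first by rewrite properEcard sWX cW.
by exists (x |: W) => //; rewrite subUset sub1set xX sWX cardsU1 xW cW /= add1n.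
Qed.

Section JoinTree.
Variables (n : nat) (E : {set hedge n}) (t : rel (hedge n)).
Hypothesis jt : join_tree E t.
Implicit Types (S : {set hedge n}) (e f g : hedge n).

Lemma tree_sym : symmetric t.
Proof. by case: jt => [[]]. Qed.

Lemma tree_in e f : t e f -> (e \in E) && (f \in E).
Proof. by case: jt => [[tE _ _ _ _] _]; apply: tE. Qed.

Lemma connected_on_setU1 S g f :
  connected_on t S -> g \in S -> t g f -> connected_on t (f |: S).
Proof.
move=> cS gS tgf; have subS p : all (mem S) p -> all (mem (f |: S)) p.
  by apply: sub_all => x xS; rewrite /= setU1r.
move=> a b /setU1P[->|aS] /setU1P[->|bS].
- by exists [::].
- have [p [pS tp <-]] := cS g b gS bS.
  exists (g :: p); split=> //=; last by rewrite tree_sym tgf.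
  by rewrite setU1r // subS.
- have [p [pS tp lp]] := cS a g aS gS.
  exists (rcons p f); split; rewrite ?last_rcons //.
    by rewrite all_rcons subS // andbT; apply: setU11.
  by rewrite rcons_path tp lp tgf.
- by have [p [pS tp lp]] := cS a b aS bS; exists p; rewrite subS.
Qed.

Lemma exists_boundary_edge S (g0 f0 : hedge n) :
  S \subset E -> g0 \in S -> f0 \in E -> f0 \notin S ->
  exists g f, [/\ g \in S, f \notin S & t g f].
Proof.
move=> sSE g0S f0E; have [[_ _ _ cE _] _] := jt.
have [p [_ tp <-]] := cE g0 f0 (subsetP sSE _ g0S) f0E.
elim: p g0 g0S tp => [|h p IH] g gS /=; first by move=> _; rewrite gS.
move=> /andP[tgh tp] lS; have [hS|hS] := boolP (h \in S); first exact: IH tp lS.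
by exists g, h.
Qed.

Lemma running_intersection S g f : S \subset E -> connected_on t S -> g \in S ->
  f \in E -> f \notin S -> t g f -> cover S :&: f \subset g.
Proof.
move=> sSE cS gS fE fS tgf; apply/subsetP => I /setIP[/bigcupP[h hS Ih] If].
have [_ jtP] := jt; have [p [pS tp]] := cS g h gS hS.
case: (shortenP tp) => p' tp' up' sp' lp'.
have gpS : {subset g :: p' <= S}.
  by move=> x /predU1P[-> //|/sp' xp]; move/allP: pS => /(_ x xp).
have fh : f != h by apply: contraNneq fS => ->.
have : I \in f :&: h by rewrite inE If Ih.
apply/subsetP/(jtP f h fE (subsetP sSE _ hS) fh (g :: p')) => //.
- by rewrite /= tree_sym tgf.
- by rewrite cons_uniq up' andbT; apply: contraNN fS => /gpS.
- by rewrite !inE eqxx orbT.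
Qed.

End JoinTree.

Section Pieces.
Variables (n : nat) (V : hedge n) (E : {set hedge n}).
Implicit Types (e : hedge n) (I J : vtx n).

Lemma Jfam_JH e J : e \in LV V :|: E -> J \in Jfam e -> J \in JH V E.
Proof. by move=> eP JU; apply/bigcupP; exists e. Qed.

Lemma set1_LV I : I \in V -> [set I] \in LV V :|: E.
Proof. by move=> IV; rewrite inE imset_f. Qed.

Lemma set1_JH I i : I \in V -> i \in I -> [set i] \in JH V E.
Proof. by move=> IV iI; apply: (Jfam_JH (set1_LV IV)); rewrite set1_Jfam1. Qed.

Lemma edge_piece e : e \in E -> e \in LV V :|: E.
Proof. by move=> eE; rewrite inE eE orbT. Qed.

Lemma piece_subset e :
  {in E, forall e : hedge n, e \subset V} -> e \in LV V :|: E -> e \subset V.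
Proof. by move=> EV /setUP[/imsetP[I IV ->]|/EV //]; rewrite sub1set. Qed.

Lemma piece_nonempty e : set0 \notin E -> e \in LV V :|: E -> exists I, I \in e.
Proof.
move=> E_neq0 /setUP[/imsetP[I _ ->]|eE]; first by exists I; rewrite set11.
by apply/set0Pn; apply: contraNneq E_neq0 => <-.
Qed.

End Pieces.

Section Realization.
Variables (R : realType) (n : nat) (V : hedge n) (E : {set hedge n}).
Variables (t : rel (hedge n)) (w : vec R n).
Hypotheses (tV : trivIset V) (EV : {in E, forall e : hedge n, e \subset V}).
Hypothesis E_neq0 : set0 \notin E.
Hypotheses (jt : join_tree E t) (w_RHS : RHSpolytope V E t w).
Implicit Types (P S : {set hedge n}) (e f g : hedge n) (I J K : vtx n) (p : vtx n -> R).

Lemma w_ge0 J : J \in JH V E -> 0 <= w J.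
Proof. by case: w_RHS => _ w0 _ _ _; apply: w0. Qed.

Lemma wsum_vertex I : I \in V -> wsum w I = 1.
Proof. by case: w_RHS => _ _ wV _ _; apply: wV. Qed.

Lemma sum_w_edge e I i : e \in E -> I \in e -> i \in I ->
  \sum_(J in Jfam e | [set i] \subset J) w J = w [set i].
Proof.
case: w_RHS => _ _ _ wE _ eE Ie iI; under eq_bigl => J do rewrite sub1set.
by apply/esym/eqP; rewrite -subr_eq0 (wE e I i).
Qed.

Lemma sum_w_tree e f K : t e f -> (1 < #|e :&: f|)%N -> K \in Jfam (e :&: f) ->
  \sum_(J in Jfam e | K \subset J) w J = \sum_(J in Jfam f | K \subset J) w J.
Proof.
move=> tef ef1 KU; have /andP[eE fE] := tree_in jt tef.
by case: w_RHS => _ _ _ _ wT; apply/eqP; rewrite -subr_eq0 (wT e f).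
Qed.

Definition wrestr e J : R := if J \in Jfam e then w J else 0.
Definition agrees p e := {in Jfam e, marg p =1 w}.
Definition realizes P p := distr (cover P) p /\ forall e, e \in P -> agrees p e.

Lemma wrestr_supp e : supp e (wrestr e).
Proof. by move=> J /negbTE; rewrite /wrestr => ->. Qed.

Lemma marg_wrestr e K : marg (wrestr e) K = \sum_(J in Jfam e | K \subset J) w J.
Proof.
rewrite (marg_supp _ (@wrestr_supp e)).
by apply: eq_bigr => J /andP[JU _]; rewrite /wrestr JU.
Qed.

Lemma marg_wrestr_Jfam e J : J \in Jfam e -> marg (wrestr e) J = w J.
Proof. by move=> JU; rewrite (marg_self (@wrestr_supp e) JU) /wrestr JU. Qed.

Lemma marg_wrestr_set1 e I i : e \in LV V :|: E -> I \in e -> i \in I ->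
  marg (wrestr e) [set i] = w [set i].
Proof.
case/setUP => [/imsetP[I' _ ->] /set1P -> iI|eE Ie iI].
  by rewrite marg_wrestr_Jfam ?set1_Jfam1.
by rewrite marg_wrestr (sum_w_edge eE Ie iI).
Qed.

Lemma distr_wrestr e : e \in LV V :|: E -> distr e (wrestr e).
Proof.
move=> eP; split=> [J||]; last 1 first.
- have [I Ie] := piece_nonempty E_neq0 eP.
  have IV := subsetP (piece_subset EV eP) I Ie.
  have sIe : [set I] \subset e by rewrite sub1set.
  rewrite -marg0 -(sum_marg_Jfam (@wrestr_supp e) sIe (sub0set _)) -(wsum_vertex IV).
  rewrite /wsum -sum_Jfam1; apply: eq_big => [J|J /andP[]]; first by rewrite sub0set andbT.
  by rewrite Jfam1 => /imsetP[i iI ->] _; apply: marg_wrestr_set1 eP Ie iI.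
- by rewrite /wrestr; case: ifP => // /(Jfam_JH eP); apply: w_ge0.
- exact: wrestr_supp.
Qed.

Lemma marg_wrestr_tree g f K : t g f -> K \subset cover (g :&: f) ->
  marg (wrestr g) K = marg (wrestr f) K.
Proof.
move=> tgf; have /andP[gE fE] := tree_in jt tgf.
have gP := edge_piece V gE; have fP := edge_piece V fE.
apply: (marg_eq_on (@wrestr_supp g) (@wrestr_supp f) (subsetIl g f) (subsetIr g f)).
move=> K' K'U.
(* The tree constraint only covers overlaps of size > 1; smaller overlaps follow
   from the total mass and from the edge constraints. *)
case: (ltngtP #|g :&: f| 1) => [|gf_gt1|/eqP/cards1P[I gfI]].
- rewrite ltnS leqn0 => /eqP/cards0_eq gf0; move: K'U; rewrite gf0 Jfam0 => /set1P ->.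
  by rewrite (distr_marg0 (distr_wrestr gP)) (distr_marg0 (distr_wrestr fP)).
- by rewrite !marg_wrestr (sum_w_tree tgf).
- move: K'U; rewrite gfI Jfam1 => /imsetP[i iI ->].
  have /setIP[Ig If] : I \in g :&: f by rewrite gfI set11.
  by rewrite (marg_wrestr_set1 gP Ig iI) (marg_wrestr_set1 fP If iI).
Qed.

Lemma cover_pieces_subset P : P \subset LV V :|: E -> cover P \subset V.
Proof. by move=> sP; apply/bigcupsP => e /(subsetP sP) /(piece_subset EV). Qed.

Lemma realizes_glue P p f : P \subset LV V :|: E -> f \in LV V :|: E -> realizes P p ->
  {in Jfam (cover P :&: f), marg p =1 marg (wrestr f)} ->
  realizes (f |: P) (glue (cover P) f p (wrestr f)).
Proof.
move=> sP fP [dp ap] pf.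
have tPf : trivIset (cover P :|: f).
  by apply: trivIsetS tV; rewrite subUset cover_pieces_subset // (piece_subset EV fP).
have [dg m1 m2] := glue_distr tPf dp (distr_wrestr fP) pf.
split=> [|e /setU1P[->|eP] J JU]; first by rewrite cover_setU cover1 setUC.
  by rewrite m2 ?Jfam_sub_cover ?marg_wrestr_Jfam.
rewrite m1 ?(ap e eP) //; apply: subset_trans (Jfam_sub_cover JU) _.
exact/cover_subset/sub_cover.
Qed.

Lemma realizes_marg P p g K : realizes P p -> g \in P -> K \subset cover g ->
  marg p K = marg (wrestr g) K.
Proof.
move=> [[_ sp _] ap] gP.
apply: (marg_eq_on sp (@wrestr_supp g) (sub_cover gP) (subxx g)) => J JU.
by rewrite (ap g gP J JU) marg_wrestr_Jfam.
Qed.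

Lemma realizes_set1 P p I i : P \subset LV V :|: E -> realizes P p ->
  I \in cover P -> i \in I -> marg p [set i] = w [set i].
Proof.
move=> sP rp /bigcupP[e eP Ie] iI.
rewrite (realizes_marg rp eP) ?(marg_wrestr_set1 (subsetP sP e eP) Ie iI) //.
by rewrite sub1set; apply/bigcupP; exists I.
Qed.

Lemma consistent_tree P p g f : realizes P p -> g \in P -> t g f ->
  cover P :&: f \subset g -> {in Jfam (cover P :&: f), marg p =1 marg (wrestr f)}.
Proof.
move=> rp gP tgf sPf K KU.
have sK : K \subset cover (g :&: f).
  by apply: subset_trans (Jfam_sub_cover KU) (cover_subset _); rewrite subsetI sPf subsetIr.
rewrite (realizes_marg rp gP) ?(marg_wrestr_tree tgf sK) //.
exact: subset_trans sK (cover_subset (subsetIl g f)).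
Qed.

Lemma realizes_add_edge S p : S \proper E -> connected_on t S -> realizes S p ->
  exists2 f, f \in E :\: S & connected_on t (f |: S) /\ exists q, realizes (f |: S) q.
Proof.
move=> /properP[sSE [f0 f0E f0S]] cS rp.
have sP : S \subset LV V :|: E := subset_trans sSE (subsetUr _ _).
have [S0|[g0 g0S]] := set_0Vmem S.
  move: rp; rewrite {}S0 => rp; exists f0; first by rewrite setD0.
  split=> [a b|]; first by rewrite setU0 => /set1P -> /set1P ->; exists [::].
  exists (glue (cover set0) f0 p (wrestr f0)).
  apply: (realizes_glue (sub0set _) (edge_piece V f0E) rp).
  apply: consistent_disjoint (proj1 rp) (distr_wrestr (edge_piece V f0E)) _.
  by rewrite /cover big_set0 set0I.
have [g [f [gS fS tgf]]] := exists_boundary_edge jt sSE g0S f0E f0S.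
have /andP[_ fE] := tree_in jt tgf.
exists f; first by rewrite inE fS.
split; first exact: (connected_on_setU1 jt cS gS tgf).
exists (glue (cover S) f p (wrestr f)); apply: (realizes_glue sP (edge_piece V fE) rp).
exact: consistent_tree rp gS tgf (running_intersection jt sSE cS gS fE fS tgf).
Qed.

Lemma realizes_edges : exists p, realizes E p.
Proof.
suff [] : connected_on t E /\ exists p, realizes E p by [].
apply: (set_grow (Q := fun S => connected_on t S /\ exists p, realizes S p)).
  split=> [a b|]; first by rewrite inE.
  exists (dirac set0); split=> [|e]; last by rewrite inE.
  by rewrite /cover big_set0; apply: distr_dirac; rewrite Jfam0 set11.
by move=> S pSE [cS [p rp]]; apply: realizes_add_edge pSE cS rp.
Qed.

Lemma realizes_add_vertex P p I : P \subset LV V :|: E -> realizes P p -> I \in V ->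
  exists q, realizes ([set I] |: P) q.
Proof.
move=> sP rp IV; have IP := set1_LV E IV.
have [IcP|IcP] := boolP (I \in cover P).
  exists p; have [dp ap] := rp; split.
    by rewrite cover_setU cover1 (setUidPr _) // sub1set.
  move=> e /setU1P[-> J|/ap //]; rewrite Jfam1 => /imsetP[i iI ->].
  exact: realizes_set1 sP rp IcP iI.
exists (glue (cover P) [set I] p (wrestr [set I])); apply: realizes_glue => //.
apply: consistent_disjoint (proj1 rp) (distr_wrestr IP) _.
by apply/eqP; rewrite setI_eq0 disjoint_sym disjoints1.
Qed.

Lemma realizes_pieces : exists p, realizes (LV V :|: E) p.
Proof.
apply: (set_grow (Q := fun W => exists p, realizes (LV W :|: E) p)).
  by rewrite /LV imset0 set0U; apply: realizes_edges.
move=> W /properP[sWV [I IV IW]] [p rp]; exists I; first by rewrite inE IW.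
rewrite /LV imsetU1 -setUA; apply: realizes_add_vertex rp IV.
by apply/setSU/imsetS.
Qed.

Lemma RHS_marginal : exists p, distr V p /\ {in JH V E, marg p =1 w}.
Proof.
have [p [dp ap]] := realizes_pieces.
have cP : cover (LV V :|: E) = V.
  apply/eqP; rewrite eqEsubset cover_pieces_subset //=.
  by apply/subsetP => I IV; apply/bigcupP; exists [set I]; rewrite ?set1_LV ?set11.
rewrite cP in dp; exists p; split=> // J /bigcupP[e eP JU].
exact: (ap e eP J JU).
Qed.

End Realization.

Section Indicators.
Variables (R : realType) (n : nat) (V : hedge n) (E : {set hedge n}).
Hypotheses (cV : cover V = [set: 'I_n]) (EV : {in E, forall e : hedge n, e \subset V}).
Hypothesis E_neq0 : set0 \notin E.
Implicit Types (I J K S : vtx n) (x w : vec R n) (e : hedge n).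

Lemma set1_JH_all i : [set i] \in JH V E.
Proof.
have /bigcupP[I IV iI] : i \in cover V by rewrite cV inE.
exact: set1_JH IV iI.
Qed.

Lemma JH_neq0 J : J \in JH V E -> J != set0.
Proof.
case/bigcupP => e eP JU; have [I Ie] := piece_nonempty E_neq0 eP.
by apply/eqP => J0; move: (Jfam_card1 JU Ie); rewrite J0 set0I cards0.
Qed.

Lemma sum_mem_card I S : \sum_(i in I) (if i \in S then 1 else 0 : R) = #|S :&: I|%:R.
Proof.
rewrite -big_mkcondr (eq_bigl (fun i => i \in S :&: I)) ?sumr_const // => i.
by rewrite inE andbC.
Qed.

Lemma prod_mem_subset J S :
  \prod_(i in J) (if i \in S then 1 else 0 : R) = if J \subset S then 1 else 0.
Proof.
case: ifP => [sJS|/negbT/subsetPn[i iJ iS]]; first by apply: big1 => i /(subsetP sJS) ->.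
by rewrite (bigD1 i) //= (negbTE iS) mul0r.
Qed.

Lemma SH_indicator x : SH V E x ->
  exists2 S, S \in Jfam V & {in JH V E, forall J, x J = if J \subset S then 1 else 0}.
Proof.
case=> _ x01 wx px; pose S := [set i | x [set i] == 1].
have xS i : x [set i] = if i \in S then 1 else 0.
  by rewrite inE; case: eqP => // ?; case: (x01 _ (set1_JH_all i)).
exists S.
  apply/JfamP; split=> [|I IV]; first by rewrite cV subsetT.
  have := wx I IV; rewrite /wsum (eq_bigr _ (fun i _ => xS i)) sum_mem_card.
  by move/eqP; rewrite pnatr_eq1 => /eqP.
move=> J JH; have [J_le1|J_gt1] := leqP #|J| 1.
  have /cards1P[i ->] : #|J| == 1%N by rewrite eqn_leq J_le1 card_gt0 JH_neq0.
  by rewrite xS sub1set.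
by rewrite px // -prod_mem_subset; apply: eq_bigr => i _; rewrite xS.
Qed.

Definition indicator S : vec R n :=
  [ffun J => if (J \in JH V E) && (J \subset S) then 1 else 0].

Lemma indicator_SH S : S \in Jfam V -> SH V E (indicator S).
Proof.
move=> SV; have pS i : indicator S [set i] = if i \in S then 1 else 0.
  by rewrite ffunE set1_JH_all sub1set.
split=> [J /negbTE JH|J _|I IV|J JH _].
- by rewrite ffunE JH.
- by rewrite ffunE; case: ifP; [right|left].
- by rewrite /wsum (eq_bigr _ (fun i _ => pS i)) sum_mem_card (Jfam_card1 SV IV).
- by rewrite ffunE JH -prod_mem_subset; apply: eq_bigr => i _; rewrite pS.
Qed.

Lemma marginal_RHS (t : rel (hedge n)) p w : distr V p -> supp_in V E w ->
  {in JH V E, marg p =1 w} -> RHSpolytope V E t w.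
Proof.
move=> dp sw pw; have [p0 sp _] := dp.
have sum_edge e K : e \in E -> K \subset cover e ->
    \sum_(J in Jfam e | K \subset J) w J = marg p K.
  move=> eE sK; rewrite -(sum_marg_Jfam sp (EV eE) sK); apply: eq_bigr => J /andP[JU _].
  by rewrite pw // (Jfam_JH _ JU) // inE eE orbT.
split=> // [J /pw <-|I IV|e I i eE Ie iI|e f eE fE _ _ K KU]; first exact: marg_ge0.
- have sIV : [set I] \subset V by rewrite sub1set.
  rewrite /wsum -(distr_marg0 dp) -(sum_marg_Jfam sp sIV (sub0set _)) -sum_Jfam1.
  apply: eq_big => [J|J]; first by rewrite sub0set andbT.
  by rewrite Jfam1 => /imsetP[i iI ->]; rewrite pw // (set1_JH E IV iI).
- have IV := subsetP (EV eE) I Ie.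
  rewrite -(pw _ (set1_JH E IV iI)) -(sum_edge e [set i] eE); last first.
    by rewrite sub1set; apply/bigcupP; exists I.
  by under eq_bigl => J do rewrite sub1set; rewrite subrr.
- have sK := Jfam_sub_cover KU.
  rewrite (sum_edge e) ?(sum_edge f) ?subrr //; apply: subset_trans sK (cover_subset _).
    exact: subsetIr.
  exact: subsetIl.
Qed.

Lemma SH_RHS t x : SH V E x -> RHSpolytope V E t x.
Proof.
move=> xSH; have [S SV xS] := SH_indicator xSH.
apply: (marginal_RHS t (distr_dirac R SV)); first by case: xSH.
by move=> J JH; rewrite marg_dirac xS.
Qed.

Lemma MC_marginal p w : distr V p -> supp_in V E w -> {in JH V E, marg p =1 w} -> MC V E w.
Proof.
move=> [p0 sp p1] sw pw.
exists #|Jfam V|, (fun j => indicator (enum_val j)), (fun j => p (enum_val j)).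
split=> [j|j||J]; first exact/indicator_SH/enum_valP; first exact: p0.
  by rewrite -(big_enum_val p) (sum_supp sp).
rewrite -(big_enum_val (fun S => p S * indicator S J)) /=.
have [JH|nJH] := boolP (J \in JH V E); last first.
  by rewrite sw // big1 // => S _; rewrite ffunE (negbTE nJH) mulr0.
rewrite -pw // (marg_supp _ sp) big_mkcondr; apply: eq_bigr => S _.
by rewrite ffunE JH /=; case: ifP; rewrite ?mulr1 ?mulr0.
Qed.

End Indicators.

Lemma conv_sub (R : realType) n (P Q : vec R n -> Prop) w :
  (forall x, P x -> Q x) -> conv P w -> conv Q w.
Proof.
by move=> PQ [k [pts [lam [Ppts l0 l1 wE]]]]; exists k, pts, lam; split=> // j; apply/PQ.
Qed.

Lemma RHS_convex (R : realType) n (V : hedge n) E t (w : vec R n) :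
  conv (RHSpolytope V E t) w -> RHSpolytope V E t w.
Proof.
case=> k [pts [lam [Ppts l0 l1 wE]]].
have sum_conv (T : finType) (P : pred T) (F : T -> vtx n) :
    \sum_(x | P x) w (F x) = \sum_j lam j * \sum_(x | P x) pts j (F x).
  under eq_bigr do rewrite wE.
  by rewrite exchange_big; apply: eq_bigr => j _; rewrite mulr_sumr.
have comb0 (a b : 'I_k -> R) : (forall j, a j - b j = 0) ->
    \sum_j lam j * a j - \sum_j lam j * b j = 0.
  by move=> ab; rewrite -sumrB big1 // => j _; rewrite -mulrBr ab mulr0.
split=> [J nJ|J JH|I IV|e I i eE Ie iI|e f eE fE tef ef1 K KU].
- by rewrite wE big1 // => j _; have [-> // _ _ _ _] := Ppts j; rewrite mulr0.
- by rewrite wE sumr_ge0 // => j _; have [_ gj _ _ _] := Ppts j; rewrite mulr_ge0 ?l0 ?gj.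
- rewrite /wsum (sum_conv _ (fun i => i \in I) (fun i => [set i])) -[RHS]l1.
  by apply: eq_bigr => j _; have [_ _ wj _ _] := Ppts j; rewrite -/(wsum _ I) wj ?mulr1.
- rewrite (sum_conv _ (fun J => (J \in Jfam e) && (i \in J)) id) wE comb0 // => j.
  by have [_ _ _ cj _] := Ppts j; apply: cj Ie iI.
- rewrite (sum_conv _ (fun J => (J \in Jfam e) && (K \subset J)) id).
  rewrite (sum_conv _ (fun J => (J \in Jfam f) && (K \subset J)) id) comb0 // => j.
  by have [_ _ _ _ cj] := Ppts j; apply: cj.
Qed.

Theorem theorem1p1 (R : realType) (n : nat) (V : {set {set 'I_n}})
  (E : {set {set {set 'I_n}}}) (t : rel {set {set 'I_n}}) :
  partition V [set: 'I_n] ->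
  (forall I, I \in V -> (2 <= #|I|)%N) ->
  (forall e, e \in E -> (e \subset V) && (2 <= #|e|)%N) ->
  alpha_acyclic E ->
  join_tree E t ->
  forall w : {ffun {set 'I_n} -> R}, MC V E w <-> RHSpolytope V E t w.
Proof.
move=> /and3P[/eqP cV tV _] _ hE _ jt w.
have EV : {in E, forall e : hedge n, e \subset V} by move=> e /hE /andP[].
have E_neq0 : set0 \notin E by apply/negP => /hE; rewrite cards0 andbF.
split=> [MCw|RHSw].
  by apply/RHS_convex/(conv_sub _ MCw) => x; apply: SH_RHS cV EV E_neq0 t x.
have [p [dp pw]] := RHS_marginal tV EV E_neq0 jt RHSw.
by apply: (MC_marginal cV dp _ pw); case: RHSw.
Qed.
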